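(* There exist an environment (a state space $\mathcal{X}$, a control set $\mathcal{U}$, an initial state distribution, Markovian stochastic stationary dynamics $p(\mathbf{x}_{t+1}\mid \mathbf{x}_t,\mathbf{u}_t)$, a time horizon $T$ and a surrogate loss $l$), a supervisor policy $\pi^*:\mathcal{X}\to\mathcal{U}$, and a policy class $\{\pi_\theta:\theta\in\Theta\}$ such that, with $\theta_{HC}^N$ and $\theta_{RC}^N$ as defined in the context: (i) there is a $\theta^*\in\Theta$ which is the unique minimizer over $\theta\in\Theta$ of $E_{p(\tau\mid\theta)}[J(\theta,\tau)]$; (ii) $\lim_{N\to\infty}\theta_{HC}^N=\theta^*$ with probability $1$; (iii) for every number $m\ge 1$ of initial supervisor demonstrations, $\lim_{N\to\infty}\theta_{RC}^N\neq\theta^*$ with probability at least $c\,e^{-m}$, where $c>0$ is a universal constant. In other words, even with infinite data the robot-centric procedure may converge to a suboptimal policy while the human-centric procedure converges to the unique best policy in the class.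
   Context: Setting: a robot task has state space $\mathcal{X}$, control set $\mathcal{U}$, an initial state density $p(\mathbf{x}_0)$ and Markovian, stochastic, stationary dynamics $p(\mathbf{x}_{t+1}\mid\mathbf{u}_t,\mathbf{x}_t)$. A trajectory of horizon $T$ is $\tau=((\mathbf{x}_0,\mathbf{u}_0),\dots,(\mathbf{x}_T,\mathbf{u}_T))$. A policy is a map $\pi:\mathcal{X}\to\mathcal{U}$; a parametrized policy class is $\{\pi_\theta:\theta\in\Theta\}$, and rolling out $\pi_\theta$ induces the trajectory density $p(\tau\mid\theta)=p(\mathbf{x}_0)\prod_{t}p(\mathbf{x}_{t+1}\mid\mathbf{u}_t,\mathbf{x}_t)p(\mathbf{u}_t\mid\mathbf{x}_t,\theta)$. A supervisor policy $\pi^*$ (not necessarily in the class) labels states with controls. A surrogate loss $l:\mathcal{U}\times\mathcal{U}\to\mathbb{R}_{\ge 0}$ (e.g. the $0/1$ loss) measures disagreement of controls, and the trajectory loss is $J(\theta,\tau)=\sum_{t} l(\pi_\theta(\mathbf{x}_t),\pi^*(\mathbf{x}_t))$, summed over the states $\mathbf{x}_t$ of $\tau$. Human-centric (HC) learning: the supervisor provides $N$ demonstration trajectories $\tau^1,\dots,\tau^N$ sampled i.i.d. by rolling out the supervisor's policy $\pi^*$, and $\theta_{HC}^N\in\arg\min_{\theta\in\Theta}\sum_{i=1}^N J(\theta,\tau^i)$. Robot-centric (RC) learning (DAgger with no mixing): start with a dataset $\mathcal{D}$ of all state–control pairs from $m$ supervisor demonstration trajectories (rolled out under $\pi^*$).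 Iterate: (Step 1) compute $\theta_k\in\arg\min_{\theta\in\Theta}\sum_{(\mathbf{x},\mathbf{u})\in\mathcal{D}_k} l(\pi_\theta(\mathbf{x}),\mathbf{u})$, each pair weighted equally; (Step 2) roll out the robot's current policy $\pi_{\theta_k}$ in the environment, have the supervisor label every visited state $\mathbf{x}_t$ with its control $\pi^*(\mathbf{x}_t)$, and add these labeled pairs to the dataset to form $\mathcal{D}_{k+1}$. $\theta_{RC}^N$ denotes the policy produced by this procedure after $N$ iterations (i.e., trained on the $m$ initial demonstrations plus $N$ robot rollouts with supervisor labels). *)

From mathcomp Require Import all_boot all_order all_algebra.
From mathcomp Require Import all_classical all_reals all_analysis.
Set Implicit Arguments. Unset Strict Implicit. Unset Printing Implicit Defensive.
Import Order.TTheory GRing.Theory Num.Theory.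
Local Open Scope ring_scope.
Local Open Scope classical_set_scope.

(* A trajectory of horizon T is the sequence of states x_0, ..., x_T.
   Controls are determined by the (deterministic) rolled-out policy:
   u_t = pi(x_t); supervisor labels are pi^*(x_t). *)
Notation traj X T := {ffun 'I_T.+1 -> X}.

Definition is_distr (R : realType) (X : finType) (p : X -> R) : Prop :=
  (forall x, 0 <= p x) /\ \sum_(x : X) p x = 1.

Definition ptraj (R : realType) (X U : finType) (T : nat) (p0 : X -> R)
  (Pdyn : X -> U -> X -> R) (pi : X -> U) (tau : traj X T) : R :=
  p0 (tau ord0) *
  \prod_(t < T) Pdyn (tau (widen_ord (leqnSn T) t))
                     (pi (tau (widen_ord (leqnSn T) t)))
                     (tau (lift ord0 t)).

Definition Jloss (R : realType) (X U Θ : finType) (T : nat)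
  (l : U -> U -> R) (psup : X -> U) (pol : Θ -> X -> U)
  (th : Θ) (tau : traj X T) : R :=
  \sum_(t < T.+1) l (pol th (tau t)) (psup (tau t)).

Definition exp_loss (R : realType) (X U Θ : finType) (T : nat) (p0 : X -> R)
  (Pdyn : X -> U -> X -> R) (l : U -> U -> R) (psup : X -> U)
  (pol : Θ -> X -> U) (th : Θ) : R :=
  \sum_(tau : traj X T) ptraj p0 Pdyn (pol th) tau * Jloss l psup pol th tau.

Definition labeled (X U : finType) (T : nat) (psup : X -> U)
  (taus : seq (traj X T)) : seq (X * U) :=
  flatten [seq [seq ((tau : traj X T) t, psup ((tau : traj X T) t)) | t <- enum 'I_T.+1]
          | tau : traj X T <- taus].

Definition emp_loss (R : realType) (X U Θ : finType) (l : U -> U -> R)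
  (pol : Θ -> X -> U) (D : seq (X * U)) (th : Θ) : R :=
  \sum_(p <- D) l (pol th p.1) p.2.

(* sel is an arbitrary rule returning, for every dataset, a minimizer of the
   empirical loss (the "theta in argmin" of the paper). *)
Definition argmin_rule (R : realType) (X U Θ : finType) (l : U -> U -> R)
  (pol : Θ -> X -> U) (sel : seq (X * U) -> Θ) : Prop :=
  forall D th, emp_loss l pol D (sel D) <= emp_loss l pol D th.

Definition hc_theta (X U Θ : finType) (T : nat) (psup : X -> U)
  (sel : seq (X * U) -> Θ) (taus : nat -> traj X T) (N : nat) : Θ :=
  sel (labeled psup [seq taus i | i <- iota 0 N]).

Definition rc_theta (X U Θ : finType) (T : nat) (psup : X -> U)
  (sel : seq (X * U) -> Θ) (m : nat) (demos rolls : nat -> traj X T) (k : nat) : Θ :=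
  sel (labeled psup ([seq demos j | j <- iota 0 m] ++ [seq rolls i | i <- iota 0 k])).

(* Law of the HC data: taus 0, taus 1, ... are i.i.d. with density ptr
   (every finite-dimensional cylinder event is measurable with the product
   probability). *)
Definition hc_law (R : realType) (d : measure_display) (Ω : measurableType d)
  (P : probability Ω R) (X : finType) (T : nat) (ptr : traj X T -> R)
  (taus : nat -> Ω -> traj X T) : Prop :=
  forall (n : nat) (s : nat -> traj X T),
    let E := [set w | forall i, (i < n)%N -> taus i w = s i] in
    measurable E /\ P E = (\prod_(i < n) ptr (s i))%:E.

(* Law of the RC (DAgger, no mixing) data: m i.i.d. supervisor demonstrations
   demos 0 .. demos (m-1) with density psup_tr, then rollouts rolls 0, rolls 1, ...
   where, conditionally on the past, rolls k has density ptr_pol (theta_k) with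
   theta_k the policy trained on the data collected before rollout k. *)
Definition rc_law (R : realType) (d : measure_display) (Ω : measurableType d)
  (P : probability Ω R) (X U Θ : finType) (T : nat) (psup : X -> U)
  (sel : seq (X * U) -> Θ) (psup_tr : traj X T -> R)
  (ptr_pol : Θ -> traj X T -> R) (m : nat)
  (demos rolls : nat -> Ω -> traj X T) : Prop :=
  forall (n : nat) (dd rr : nat -> traj X T),
    let E := [set w | (forall j, (j < m)%N -> demos j w = dd j) /\
                      (forall i, (i < n)%N -> rolls i w = rr i)] in
    measurable E /\
    P E = ((\prod_(j < m) psup_tr (dd j)) *
           \prod_(i < n) ptr_pol (rc_theta psup sel m dd rr i) (rr i))%:E.

(* convergence in the finite (discrete) parameter set: eventually equal *)
Definition ev_eq (A : Type) (u : nat -> A) (a : A) : Prop :=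
  exists N0, forall N, (N0 <= N)%N -> u N = a.

From mathcomp Require Import all_boot all_order all_algebra.
From mathcomp Require Import all_classical all_reals all_analysis.
Set Implicit Arguments. Unset Strict Implicit. Unset Printing Implicit Defensive.
Import Order.TTheory GRing.Theory Num.Theory.
Local Open Scope ring_scope.
Local Open Scope classical_set_scope.

(* A deterministic counterexample.  From the start state the supervisor's control
   leads to state 1, policy [true] to state 2 and policy [false] to state 3, and the
   loss of a control is its distance to the supervisor's label 0.  The costs in
   [ex_pol] make [false] one unit worse than [true] on the supervisor's trajectory
   but one unit better on the trajectory of either robot policy, while [true] keeps
   the smaller expected loss on its own trajectory (3 against 4).  Human-centric
   learning only sees supervisor trajectories and picks [true] as soon as N >= 1.
   DAgger with m demonstrations and k robot rollouts sees an empirical-loss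
   difference of k - m, so it settles on [false] once k > m.  The dynamics being
   deterministic, both happen with probability one, which is at least e^{-m}. *)

Lemma prod_natb (S : comPzSemiRingType) (I : finType) (b : I -> bool) :
  \prod_(i : I) ((b i)%:R : S) = [forall i, b i]%:R.
Proof.
case: forallP => [allb|/existsNP[i /negP/negbTE bi]].
  by rewrite big1 // => i _; rewrite allb.
by rewrite (bigD1 i) //= bi mul0r.
Qed.

Lemma sumr_const_in (V : nmodType) (I : eqType) (s : seq I) (F : I -> V) c :
  {in s, forall i, F i = c} -> \sum_(i <- s) F i = c *+ size s.
Proof.
elim: s => [|i s IH] Fc; first by rewrite big_nil.
rewrite big_cons Fc ?mem_head // IH ?mulrS // => j sj.
by apply: Fc; rewrite inE sj orbT.
Qed.

Section DeterministicDynamics.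
Variables (R : realType) (X U : finType).

Definition point_distr (x0 : X) : X -> R := fun x => (x == x0)%:R.

Definition det_dyn (f : X -> U -> X) : X -> U -> X -> R :=
  fun x u => point_distr (f x u).

Lemma is_distr_point x0 : is_distr (point_distr x0).
Proof.
split=> [x|]; first exact: ler0n.
by rewrite /point_distr (bigD1 x0) //= eqxx big1 ?addr0 // => x /negbTE ->.
Qed.

Definition rollout (T : nat) (f : X -> U -> X) (pi : X -> U) (x0 : X) : traj X T :=
  [ffun t : 'I_T.+1 => iter t (fun x => f x (pi x)) x0].

Lemma rolloutP T f pi x0 (tau : traj X T) :
  reflect (tau ord0 = x0 /\
           forall t : 'I_T, let x := tau (widen_ord (leqnSn T) t) in
             tau (lift ord0 t) = f x (pi x))
          (tau == rollout T f pi x0).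
Proof.
apply: (iffP eqP) => [->|[tau0 tauS]].
  by split=> [|t]; rewrite !ffunE.
apply/ffunP => -[n ltn]; rewrite ffunE /=.
elim: n ltn => [|n IH] ltn; first by rewrite -tau0 (_ : Ordinal ltn = ord0) //; apply: val_inj.
have ltnT : (n < T)%N by [].
have := tauS (Ordinal ltnT).
rewrite (_ : lift _ _ = Ordinal ltn); last exact: val_inj.
rewrite (_ : widen_ord _ _ = Ordinal (ltnW ltn)); last exact: val_inj.
by move=> ->; rewrite IH.
Qed.

Lemma ptraj_det T f pi x0 (tau : traj X T) :
  ptraj (point_distr x0) (det_dyn f) pi tau = (tau == rollout T f pi x0)%:R.
Proof.
rewrite /ptraj /det_dyn /point_distr prod_natb -natrM mulnb; congr (nat_of_bool _)%:R.
apply/andP/rolloutP => [[/eqP tau0 /forallP tauS]|[tau0 tauS]].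
  by split=> // t; apply/eqP/tauS.
by split; [apply/eqP|apply/forallP => t; apply/eqP].
Qed.

Lemma ptraj_det_rollout T f pi x0 :
  ptraj (point_distr x0) (det_dyn f) pi (rollout T f pi x0) = 1.
Proof. by rewrite ptraj_det eqxx. Qed.

Lemma exp_loss_det (Θ : finType) T f x0 (l : U -> U -> R) psup (pol : Θ -> X -> U) th :
  exp_loss T (point_distr x0) (det_dyn f) l psup pol th =
  Jloss l psup pol th (rollout T f (pol th) x0).
Proof.
rewrite /exp_loss (bigD1 (rollout T f (pol th) x0)) //= ptraj_det eqxx mul1r.
by rewrite big1 ?addr0 // => tau /negbTE tau_ne; rewrite ptraj_det tau_ne mul0r.
Qed.

End DeterministicDynamics.

Section EmpiricalLoss.
Variables (R : realType) (X U Θ : finType) (l : U -> U -> R) (pol : Θ -> X -> U).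

Lemma emp_loss_labeled T psup (taus : seq (traj X T)) th :
  emp_loss l pol (labeled psup taus) th = \sum_(tau <- taus) Jloss l psup pol th tau.
Proof.
rewrite /emp_loss /labeled big_flatten big_map; apply: eq_bigr => tau _.
by rewrite big_map /Jloss enumT.
Qed.

Lemma argmin_rule_strict sel D th :
  argmin_rule l pol sel ->
  (forall th', th' != th -> emp_loss l pol D th < emp_loss l pol D th') -> sel D = th.
Proof.
move=> sel_min th_min; apply/eqP; apply: contraT => /th_min.
by rewrite ltNge sel_min.
Qed.

End EmpiricalLoss.

Section AlmostSure.
Variables (R : realType) (d : measure_display) (Ω : measurableType d) (P : probability Ω R).

Lemma probability_bigcap1 (E : nat -> set Ω) :
  (forall n, measurable (E n)) -> (forall n, P (E n) = 1%E) ->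
  measurable (\bigcap_n E n) /\ P (\bigcap_n E n) = 1%E.
Proof.
move=> mE PE; have mcapE : measurable (\bigcap_n E n) by exact: bigcapT_measurable.
split=> //.
have [N [mN PN0 capCN]] : P.-negligible (\bigcup_n ~` E n).
  apply: negligible_bigcup => n; exists (~` E n); split=> //; first exact: measurableC.
  by have := probability_setC P (mE n); rewrite PE subee.
have PcapC0 : P (~` \bigcap_n E n) = 0%E.
  apply/eqP; rewrite -measure_le0 -PN0; apply: le_measure; rewrite ?inE //.
    exact: measurableC.
  by rewrite setC_bigcap.
move: PcapC0; rewrite probability_setC //.
have := probability_le1 P mcapE; have := measure_ge0 P (\bigcap_n E n).
by case: (P _) => [r| |] //= _ _ [/eqP]; rewrite subr_eq0 => /eqP <-.
Qed.

Lemma hc_law_as_constant (X : finType) T (ptr : traj X T -> R) taus s :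
  hc_law P ptr taus -> ptr s = 1 ->
  exists A, measurable A /\ P A = 1%E /\ A `<=` [set w | forall i, taus i w = s].
Proof.
move=> law ptr_s; pose E n := [set w | forall i, (i < n)%N -> taus i w = s].
have [mA PA] : measurable (\bigcap_n E n) /\ P (\bigcap_n E n) = 1%E.
  apply: probability_bigcap1 => n; have [mE PE] := law n (fun=> s) => //.
  by rewrite PE big1.
by exists (\bigcap_n E n); split=> //; split=> // w capEw i; exact: capEw i.+1 I i (ltnSn i).
Qed.

Lemma rc_law_as_constant (X U Θ : finType) T psup (sel : seq (X * U) -> Θ)
    (psup_tr : traj X T -> R) ptr_pol m demos rolls dd rr :
  rc_law P psup sel psup_tr ptr_pol m demos rolls ->
  (forall j, (j < m)%N -> psup_tr (dd j) = 1) ->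
  (forall i, ptr_pol (rc_theta psup sel m dd rr i) (rr i) = 1) ->
  exists A, measurable A /\ P A = 1%E /\
    A `<=` [set w | (forall j, (j < m)%N -> demos j w = dd j) /\ forall i, rolls i w = rr i].
Proof.
move=> law dd1 rr1.
pose E n := [set w | (forall j, (j < m)%N -> demos j w = dd j) /\
                     (forall i, (i < n)%N -> rolls i w = rr i)].
have [mA PA] : measurable (\bigcap_n E n) /\ P (\bigcap_n E n) = 1%E.
  apply: probability_bigcap1 => n; have [mE PE] := law n dd rr => //.
  by rewrite PE big1 ?mul1r ?big1 // => j _; exact: dd1.
exists (\bigcap_n E n); split=> //; split=> // w capEw.
by split=> [|i]; [exact: (capEw 0%N I).1 | exact: (capEw i.+1 I).2 i (ltnSn i)].
Qed.

End AlmostSure.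

Section DaggerRollouts.
Variables (X U Θ : finType) (T : nat) (psup : X -> U) (sel : seq (X * U) -> Θ).
Variables (m : nat) (demos : nat -> traj X T) (next : Θ -> traj X T).

Fixpoint dagger_rollouts (k : nat) : seq (traj X T) :=
  if k is k'.+1 then
    let rolls := dagger_rollouts k' in
    rcons rolls (next (sel (labeled psup ([seq demos j | j <- iota 0 m] ++ rolls))))
  else [::].

Definition dagger_rollout (k : nat) : traj X T := last (demos 0) (dagger_rollouts k.+1).

Lemma map_dagger_rollout k : [seq dagger_rollout i | i <- iota 0 k] = dagger_rollouts k.
Proof.
elim: k => // k IH.
by rewrite -[k.+1]addn1 iotaD map_cat IH cats1 /dagger_rollout add0n addn1 /= last_rcons.
Qed.

Lemma dagger_rolloutE k :
  dagger_rollout k = next (rc_theta psup sel m demos dagger_rollout k).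
Proof. by rewrite /rc_theta map_dagger_rollout /dagger_rollout last_rcons. Qed.

End DaggerRollouts.

Definition ex_step (x : 'I_4) (u : 'I_5) : 'I_4 :=
  if x == ord0 then inord (minn u.+1 3) else x.

Definition ex_sup (x : 'I_4) : 'I_5 := ord0.

Definition ex_pol (th : bool) (x : 'I_4) : 'I_5 :=
  inord (nth 0 (if th then [:: 1; 0; 2; 4] else [:: 2; 0; 0; 2]) x).

Notation ex_rollout pi := (rollout 1 ex_step pi ord0).

Definition ex_cost (th : bool) (tau : traj 'I_4 1) : nat := \sum_(t < 2) ex_pol th (tau t).

Lemma ex_costE th pi :
  ex_cost th (ex_rollout pi) = (ex_pol th ord0 + ex_pol th (ex_step ord0 (pi ord0)))%N.
Proof. by rewrite /ex_cost big_ord_recr big_ord1 /= !ffunE. Qed.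

Lemma ex_cost_sup :
  ex_cost false (ex_rollout ex_sup) = (ex_cost true (ex_rollout ex_sup)).+1.
Proof. by rewrite !ex_costE /ex_step /ex_pol /= !inordK. Qed.

Lemma ex_cost_robot th :
  ex_cost true (ex_rollout (ex_pol th)) = (ex_cost false (ex_rollout (ex_pol th))).+1.
Proof. by case: th; rewrite !ex_costE /ex_step /ex_pol /= !inordK. Qed.

Lemma ex_cost_own :
  ex_cost true (ex_rollout (ex_pol true)) = 3%N /\
  ex_cost false (ex_rollout (ex_pol false)) = 4%N.
Proof. by rewrite !ex_costE /ex_step /ex_pol /= !inordK. Qed.

Section ExampleLosses.
Variable R : realType.

Definition ex_loss (u v : 'I_5) : R := `|u%:R - v%:R|.

Lemma ex_Jloss th tau : Jloss ex_loss ex_sup ex_pol th tau = (ex_cost th tau)%:R.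
Proof.
rewrite /Jloss /ex_cost natr_sum; apply: eq_bigr => t _.
by rewrite /ex_loss subr0 normr_nat.
Qed.

Definition ex_gap (tau : traj 'I_4 1) : R := (ex_cost true tau)%:R - (ex_cost false tau)%:R.

Lemma ex_emp_loss_gap taus :
  emp_loss ex_loss ex_pol (labeled ex_sup taus) true -
  emp_loss ex_loss ex_pol (labeled ex_sup taus) false = \sum_(tau <- taus) ex_gap tau.
Proof. by rewrite !emp_loss_labeled -sumrB; apply: eq_bigr => tau _; rewrite !ex_Jloss. Qed.

Lemma ex_gap_sup : ex_gap (ex_rollout ex_sup) = -1.
Proof. by rewrite /ex_gap ex_cost_sup -natr1 opprD addrA subrr add0r. Qed.

Lemma ex_gap_robot th : ex_gap (ex_rollout (ex_pol th)) = 1.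
Proof. by rewrite /ex_gap ex_cost_robot -natr1 addrAC subrr add0r. Qed.

Lemma ex_emp_loss_demos_lt (demos : seq (traj 'I_4 1)) :
  {in demos, forall tau, tau = ex_rollout ex_sup} -> demos != [::] ->
  emp_loss ex_loss ex_pol (labeled ex_sup demos) true <
  emp_loss ex_loss ex_pol (labeled ex_sup demos) false.
Proof.
move=> demosE demos_nil; rewrite -subr_lt0 ex_emp_loss_gap (sumr_const_in (c := -1)).
  by rewrite mulNrn oppr_lt0 mulrn_wgt0 // lt0n size_eq0.
by move=> tau /demosE ->; exact: ex_gap_sup.
Qed.

Lemma ex_emp_loss_rollouts_lt (demos rolls : seq (traj 'I_4 1)) :
  {in demos, forall tau, tau = ex_rollout ex_sup} ->
  {in rolls, forall tau, exists th, tau = ex_rollout (ex_pol th)} ->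
  (size demos < size rolls)%N ->
  emp_loss ex_loss ex_pol (labeled ex_sup (demos ++ rolls)) false <
  emp_loss ex_loss ex_pol (labeled ex_sup (demos ++ rolls)) true.
Proof.
move=> demosE rollsE lt_size; rewrite -subr_gt0 ex_emp_loss_gap big_cat /=.
rewrite (sumr_const_in (c := -1)) => [|tau /demosE ->]; last exact: ex_gap_sup.
rewrite (sumr_const_in (c := 1)) => [|tau /rollsE [th ->]]; last exact: ex_gap_robot.
by rewrite mulNrn addrC subr_gt0 ltr_pMn2l.
Qed.

End ExampleLosses.

Theorem theorem1 (R : realType) :
  exists c : R, 0 < c /\
  exists (X U Θ : finType) (p0 : X -> R) (Pdyn : X -> U -> X -> R) (T : nat)
         (l : U -> U -> R) (psup : X -> U) (pol : Θ -> X -> U),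
    is_distr p0 /\ (forall x u, is_distr (Pdyn x u)) /\ (forall u v, 0 <= l u v) /\
    exists thstar : Θ,
      (* (i) thstar is the unique minimizer of the expected trajectory loss *)
      (forall th, th != thstar ->
         exp_loss T p0 Pdyn l psup pol thstar < exp_loss T p0 Pdyn l psup pol th) /\
      forall sel : seq (X * U) -> Θ, argmin_rule l pol sel ->
      (* (ii) HC converges to thstar with probability 1 *)
      (forall (d : measure_display) (Ω : measurableType d) (P : probability Ω R)
              (taus : nat -> Ω -> traj X T),
         hc_law P (ptraj p0 Pdyn psup) taus ->
         exists A : set Ω, measurable A /\ P A = 1%E /\
           A `<=` [set w | ev_eq (hc_theta psup sel (fun i => taus i w)) thstar]) /\
      (* (iii) RC converges to a policy other than thstar with prob >= c e^{-m} *)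
      (forall m : nat, (1 <= m)%N ->
       forall (d : measure_display) (Ω : measurableType d) (P : probability Ω R)
              (demos rolls : nat -> Ω -> traj X T),
         rc_law P psup sel (ptraj p0 Pdyn psup)
                (fun th => ptraj p0 Pdyn (pol th)) m demos rolls ->
         exists A : set Ω, measurable A /\ ((c * expR (- m%:R))%:E <= P A)%E /\
           A `<=` [set w | exists th' : Θ, th' != thstar /\
              ev_eq (rc_theta psup sel m (fun j => demos j w) (fun i => rolls i w)) th']).
Proof.
exists 1; split; first exact: ltr01.
exists 'I_4, 'I_5, bool, (point_distr R ord0), (det_dyn R ex_step), 1%N, (ex_loss R),
  ex_sup, ex_pol.
split; first exact: is_distr_point.
split; first by move=> x u; exact: is_distr_point.
split; first by move=> u v; exact: normr_ge0.
exists true; split.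
  case=> // _; rewrite !exp_loss_det !ex_Jloss ltr_nat.
  by case: ex_cost_own => -> ->.
move=> sel sel_min; split.
  move=> d Ω P taus law.
  have [A [mA [PA1 tausA]]] := hc_law_as_constant law (ptraj_det_rollout _ _ _ _ _).
  exists A; split=> //; split=> // w /tausA tausw; exists 1%N => N N_gt0.
  apply: argmin_rule_strict => // -[] // _; apply: ex_emp_loss_demos_lt.
    by move=> tau /mapP [i _ ->].
  by rewrite -size_eq0 size_map size_iota -lt0n.
move=> m _ d Ω P demos rolls law.
pose rr := dagger_rollout ex_sup sel m (fun=> ex_rollout ex_sup)
  (fun th => ex_rollout (ex_pol th)).
have rr_prob i : ptraj (point_distr R ord0) (det_dyn R ex_step)
    (ex_pol (rc_theta ex_sup sel m (fun=> ex_rollout ex_sup) rr i)) (rr i) = 1.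
  by rewrite [rr i]dagger_rolloutE ptraj_det_rollout.
have [A [mA [PA1 obsA]]] :=
  rc_law_as_constant law (fun _ _ => ptraj_det_rollout _ _ _ _ _) rr_prob.
exists A; split=> //; split.
  by rewrite PA1 mul1r lee_fin expR_le1 oppr_le0 ler0n.
move=> w /obsA [demosw rollsw]; exists false; split=> //; exists m.+1 => k m_lt_k.
apply: argmin_rule_strict => // -[] // _; apply: ex_emp_loss_rollouts_lt.
- by move=> tau /mapP [j]; rewrite mem_iota => /andP [_ j_lt_m] ->; exact: demosw.
- by move=> tau /mapP [i _ ->]; rewrite rollsw [rr i]dagger_rolloutE; eexists.
- by rewrite !size_map !size_iota.
Qed.
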